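(* Let $D$ be a binary normal delta-matroid. Then there is a full lc-sequence for $D$ if and only if every summand of $D$ that is even, connected, and has nonempty ground set is of the form $(\{v\},\{\emptyset\})$ for some element $v$ of the ground set of $D$.
   Context: A set system is a pair $D=(V,S)$ with $V$ a finite set (the ground set) and $S$ a set of subsets of $V$. For set systems $D_1=(V_1,S_1)$, $D_2=(V_2,S_2)$ with disjoint ground sets, the direct sum is $D_1\oplus D_2=(V_1\cup V_2,\{X_1\cup X_2: X_1\in S_1, X_2\in S_2\})$; $D_1$ is a summand of $D$ if $D=D_1\oplus D_2$ for some $D_2$. $D$ is connected if it is not the direct sum of two set systems with nonempty ground sets. $D$ is even if all sets in $S$ have cardinalities of the same parity. Graphs are finite, may have loops, but no multiple edges; the adjacency matrix $A(H)$ is over $GF(2)$ with diagonal entry $1$ exactly at looped vertices, and $H[X]$ is the induced subgraph on $X$. $\mathcal{D}_H=(V(H),S)$ with $X\in S$ iff $A(H[X])$ is invertible over $GF(2)$ (the empty matrix counts as invertible). A binary normal delta-matroid is a set system of the form $\mathcal{D}_H$ for some graph $H$. A sequence $(v_1,\dots,v_k)$ of mutually distinct elements of $V$ is an lc-sequence for $D=(V,S)$ if $\{v_1,\dots,v_i\}\in S$ for all $i\in\{0,\dots,k\}$; it is full if moreover $\{v_1,\dots,v_k\}$ is an inclusion-maximal element of $S$. *)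

From HB Require Import structures.
From mathcomp Require Import all_boot all_order all_algebra.
Set Implicit Arguments. Unset Strict Implicit. Unset Printing Implicit Defensive.
Import GRing.Theory.
Local Open Scope ring_scope.

Record setsys (T : finType) := SetSys { gset : {set T}; sets : {set {set T}} }.

Section SetSystems.
Variable T : finType.

Definition wf_setsys (D : setsys T) : Prop :=
  forall X, X \in sets D -> X \subset gset D.

(* direct sum (intended for disjoint ground sets) *)
Definition dsum (D1 D2 : setsys T) : setsys T :=
  SetSys (gset D1 :|: gset D2)
         [set X1 :|: X2 | X1 in sets D1, X2 in sets D2].

Definition is_summand (D1 D : setsys T) : Prop :=
  exists D2 : setsys T,
    [/\ wf_setsys D1, wf_setsys D2, [disjoint gset D1 & gset D2]
      & D = dsum D1 D2].

Definition connected (D : setsys T) : Prop :=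
  ~ exists D1 D2 : setsys T,
      [/\ wf_setsys D1, wf_setsys D2, [disjoint gset D1 & gset D2]
        & [/\ gset D1 != set0, gset D2 != set0 & D = dsum D1 D2]].

Definition even_setsys (D : setsys T) : Prop :=
  exists b : bool, forall X, X \in sets D -> odd #|X| = b.

Definition adjmx (A : T -> T -> bool) (X : {set T}) : 'M['F_2]_#|X| :=
  \matrix_(i, j) ((A (enum_val i) (enum_val j) : nat)%:R : 'F_2).

Definition DH (A : T -> T -> bool) (V : {set T}) : setsys T :=
  SetSys V [set X in powerset V | adjmx A X \in unitmx].

(* binary normal delta-matroid: D = D_H for some graph H on V(D);
   graphs: symmetric adjacency relation, loops allowed (A x x) *)
Definition binary_normal (D : setsys T) : Prop :=
  exists A : T -> T -> bool, (forall x y, A x y = A y x) /\ D = DH A (gset D).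

Definition lc_seq (D : setsys T) (s : seq T) : Prop :=
  [/\ uniq s, {subset s <= gset D} &
      forall i, (i <= size s)%N -> [set x in take i s] \in sets D].

Definition full_lc_seq (D : setsys T) (s : seq T) : Prop :=
  lc_seq D s /\
  forall Y, Y \in sets D -> [set x in s] \subset Y -> Y = [set x in s].

End SetSystems.

From mathcomp Require Import all_boot all_order all_algebra.
From Stdlib Require Import Classical.
Set Implicit Arguments. Unset Strict Implicit. Unset Printing Implicit Defensive.
Import GRing.Theory.
Local Open Scope ring_scope.

(* Write [H] for the graph of [A], so [D = D_H]. For a looped vertex [v] and
   [v \notin X], [v |: X] is in [D_H] iff [X] is in [D_(H*v)], where [H*v] is
   local complementation at [v]; so a full lc-sequence amounts to
   complementing at loops until the graph is edgeless. A loopless union [Z]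
   of components of [H] spans an even summand [D_(H[Z])], because nonsingular
   alternating matrices over GF(2) have even size.
   Only if: every prefix of an lc-sequence meets the ground set of an even
   summand in an even set, so the sequence avoids it, and maximality forces
   the summand to contain only the empty set; if it is connected, its ground
   set is then a singleton.
   If: an edge inside such a [Z] would give an even summand with a nonempty
   set, hence a connected one; so all such [Z] are edgeless ("no vertex is
   obstructed"). If [H] is unobstructed and has a loop, some looped [v] leaves
   [H*v] unobstructed: if [H*v] is obstructed, some obstructed vertex [u] of
   [H*v] is adjacent to [v], and [H*u] has strictly fewer obstructed vertices
   than [H*v]. *)

Section Nonsingular.
Variables (F : fieldType) (T : finType).
Implicit Types (M : T -> T -> F) (X Y : {set T}).

(* Invertibility of the principal submatrix [M[X]], phrased as triviality of
   its left kernel. *)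
Definition nonsingular M X : Prop :=
  forall f : T -> F, (forall y, y \in X -> \sum_(x in X) f x * M x y = 0) ->
    forall x, x \in X -> f x = 0.

Lemma unitmx_nonsingular M X :
  (\matrix_(i, j) M (enum_val i) (enum_val j) : 'M[F]_#|X|) \in unitmx <->
  nonsingular M X.
Proof.
set N := \matrix_(i, j) _; split.
- move=> N_unit f f_ker x xX.
  pose u : 'rV[F]_#|X| := \row_i f (enum_val i).
  have uN0 : u *m N = 0.
    apply/rowP => j; rewrite !mxE -[RHS](f_ker _ (enum_valP j)).
    by rewrite (@big_enum_val _ _ _ _ (mem X)); apply: eq_bigr => i _; rewrite !mxE.
  have u0 : u = 0 by rewrite -[u]mulmx1 -(mulmxV N_unit) mulmxA uN0 mul0mx.
  have := congr1 (fun w : 'rV_#|X| => w 0 (enum_rank_in xX x)) u0.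
  by rewrite !mxE enum_rankK_in.
- move=> N_ns; rewrite -row_free_unit; apply: inj_row_free => u uN0.
  pose f x := \sum_(i < #|X| | enum_val i == x) u 0 i.
  have fu i : f (enum_val i) = u 0 i.
    by rewrite /f (big_pred1 i) // => k /=; apply/eqP/eqP => [/enum_val_inj|->].
  apply/rowP => i; rewrite mxE -fu; apply: N_ns (enum_valP i) => y yX.
  have := congr1 (fun w : 'rV_#|X| => w 0 (enum_rank_in yX y)) uN0.
  rewrite !mxE (@big_enum_val _ _ _ _ (mem X)) => uNy; rewrite -[RHS]uNy.
  by apply: eq_bigr => k _; rewrite fu !mxE enum_rankK_in.
Qed.

Lemma nonsingular0 M : nonsingular M set0.
Proof. by move=> f _ x; rewrite inE. Qed.

Lemma zero_row_singular M Y x :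
  x \in Y -> (forall t, t \in Y -> M x t = 0) -> ~ nonsingular M Y.
Proof.
move=> xY Mx0 Y_ns.
suff /eqP : ((x == x)%:R : F) = 0 by rewrite eqxx oner_eq0.
apply: (Y_ns (fun z => (z == x)%:R) _ x xY) => t tY.
rewrite (big_setD1 x) //= Mx0 // mulr0 add0r.
by rewrite big1 // => z /setD1P [/negbTE -> _]; rewrite mul0r.
Qed.

Section Block.
Variables (M : T -> T -> F) (X Y : {set T}).
Hypothesis sYX : Y \subset X.
Hypothesis cross0 : forall a b, a \in Y -> b \in X :\: Y -> M a b = 0 /\ M b a = 0.

Lemma sum_block (f : T -> F) t :
  \sum_(z in X) f z * M z t =
  \sum_(z in Y) f z * M z t + \sum_(z in X :\: Y) f z * M z t.
Proof. by rewrite (big_setID Y) (setIidPr sYX). Qed.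

Lemma nonsingular_restrict : nonsingular M X -> nonsingular M Y.
Proof.
move=> X_ns g g_ker x xY.
pose f z := if z \in Y then g z else 0.
have <- : f x = g x by rewrite /f xY.
apply: X_ns (subsetP sYX x xY) => t tX.
rewrite sum_block [S in _ + S]big1 ?addr0 => [|z /setDP [_ /negbTE zY]]; last first.
  by rewrite /f zY mul0r.
rewrite (eq_bigr (fun z => g z * M z t)) => [|z zY]; last by rewrite /f zY.
have [tY|tY] := boolP (t \in Y); first exact: g_ker.
have tXY : t \in X :\: Y by rewrite inE tY.
by rewrite big1 // => z zY; rewrite (cross0 zY tXY).1 mulr0.
Qed.

Lemma nonsingular_glue :
  nonsingular M Y -> nonsingular M (X :\: Y) -> nonsingular M X.
Proof.
move=> Y_ns XY_ns f f_ker x xX.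
have sumY0 t : t \in Y -> \sum_(z in Y) f z * M z t = 0.
  move=> tY; rewrite -[RHS](f_ker t (subsetP sYX t tY)) sum_block.
  by rewrite [S in _ + S]big1 ?addr0 // => z zXY; rewrite (cross0 tY zXY).2 mulr0.
have sumXY0 t : t \in X :\: Y -> \sum_(z in X :\: Y) f z * M z t = 0.
  move=> tXY; have /setDP [tX _] := tXY; rewrite -[RHS](f_ker t tX) sum_block.
  by rewrite [S in S + _]big1 ?add0r // => z zY; rewrite (cross0 zY tXY).1 mulr0.
have [xY|xY] := boolP (x \in Y); first exact: Y_ns sumY0 _ xY.
by apply: XY_ns sumXY0 _ _; rewrite inE xY.
Qed.

End Block.

Lemma nonsingular_block M X Y :
  Y \subset X ->
  (forall a b, a \in Y -> b \in X :\: Y -> M a b = 0 /\ M b a = 0) ->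
  nonsingular M X <-> nonsingular M Y /\ nonsingular M (X :\: Y).
Proof.
move=> sYX cross0; split; last by case; apply: nonsingular_glue.
have XXY : X :\: (X :\: Y) = Y by rewrite setDDr setDv set0U (setIidPr sYX).
have cross0' a b : a \in X :\: Y -> b \in X :\: (X :\: Y) -> M a b = 0 /\ M b a = 0.
  by rewrite XXY => aXY bY; have [] := cross0 b a bY aXY.
move=> X_ns; split; first exact: nonsingular_restrict cross0 X_ns.
exact: nonsingular_restrict (subsetDl X Y) cross0' X_ns.
Qed.

End Nonsingular.

Lemma addF2xx (a : 'F_2) : a + a = 0.
Proof. by apply: addrr_pchar2; apply: pchar_Fp. Qed.

Lemma F2_add_eq0 (a b : 'F_2) : a + b = 0 -> a = b.
Proof. by move=> ab0; rewrite -[b]add0r -ab0 -addrA addF2xx addr0. Qed.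

Definition F2_of_bool (b : bool) : 'F_2 := (b : nat)%:R.

Lemma F2_of_bool_addb a b : F2_of_bool (a (+) b) = F2_of_bool a + F2_of_bool b.
Proof. by case: a; case: b; rewrite /F2_of_bool /= ?addr0 ?add0r ?addF2xx. Qed.

Lemma F2_of_bool_andb a b : F2_of_bool (a && b) = F2_of_bool a * F2_of_bool b.
Proof. by case: a; case: b; rewrite /F2_of_bool /= ?mulr0 ?mul0r ?mulr1. Qed.

Section Graphs.
Variable T : finType.
Implicit Types (A : rel T) (V W X Y Z : {set T}).

Definition adjF A : T -> T -> 'F_2 := fun x y => F2_of_bool (A x y).

Lemma DHP A V X : X \in sets (DH A V) <-> X \subset V /\ nonsingular (adjF A) X.
Proof.
rewrite inE powersetE -(unitmx_nonsingular (adjF A) X).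
by split => [/andP[]|[-> ->]].
Qed.

Lemma set0_DH A V : set0 \in sets (DH A V).
Proof. by apply/DHP; split; [apply: sub0set | apply: nonsingular0]. Qed.

(* For a looped [v], [adjF (loc_comp A v)] is the Schur complement of the
   entry [A v v] in the adjacency matrix. *)
Definition loc_comp A v : rel T := fun x y => A x y (+) (A x v && A v y).

Lemma loc_comp_sym A v : symmetric A -> symmetric (loc_comp A v).
Proof. by move=> symA x y; rewrite /loc_comp symA (symA x v) (symA v y) andbC. Qed.

Lemma nonsingular_loc_comp A v Y : A v v -> v \notin Y ->
  nonsingular (adjF (loc_comp A v)) Y <-> nonsingular (adjF A) (v |: Y).
Proof.
move=> Avv vY.
have Mvv : adjF A v v = 1 by rewrite /adjF Avv.
have sum_loc_comp (g : T -> 'F_2) t :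
    \sum_(z in Y) g z * adjF (loc_comp A v) z t =
    \sum_(z in Y) g z * adjF A z t + (\sum_(z in Y) g z * adjF A z v) * adjF A v t.
  rewrite big_distrl -big_split; apply: eq_bigr => z _ /=.
  by rewrite /adjF F2_of_bool_addb F2_of_bool_andb mulrDr mulrA.
split=> [Y_ns f f_ker|vY_ns g g_ker x xY].
- have := f_ker v (setU11 v Y); rewrite big_setU1 //= Mvv mulr1 => /F2_add_eq0 fv.
  have fY0 : forall x, x \in Y -> f x = 0.
    apply: Y_ns => t tY; rewrite sum_loc_comp -fv.
    by have := f_ker t (setU1r v tY); rewrite big_setU1 //= addrC.
  move=> x /setU1P [->|]; last exact: fY0.
  by rewrite fv big1 // => z zY; rewrite fY0 ?mul0r.
- pose S := \sum_(z in Y) g z * adjF A z v.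
  pose f z := if z == v then S else g z.
  have fg z : z \in Y -> f z = g z.
    by rewrite /f; case: eqP => // ->; rewrite (negbTE vY).
  rewrite -fg //; apply: vY_ns (setU1r v xY) => t.
  rewrite big_setU1 //= {1}/f eqxx (eq_bigr (fun z => g z * adjF A z t)); last first.
    by move=> z zY; rewrite fg.
  case/setU1P=> [->|tY]; first by rewrite Mvv mulr1 addF2xx.
  by rewrite addrC -sum_loc_comp g_ker.
Qed.

(* For an edge [xy] between unlooped vertices, the Schur complement of the
   block on [{x, y}]. *)
Definition edge_pivot A x y : rel T :=
  fun z w => A z w (+) (A z x && A y w) (+) (A z y && A x w).

Lemma edge_pivot_sym A x y : symmetric A -> symmetric (edge_pivot A x y).
Proof.
move=> symA z w; rewrite /edge_pivot (symA w z) (symA w x) (symA y z).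
rewrite (symA w y) (symA x z).
by case: (A z w); case: (A x w); case: (A z y); case: (A y w); case: (A z x).
Qed.

Lemma edge_pivot_loop A x y z : symmetric A -> edge_pivot A x y z z = A z z.
Proof.
move=> symA; rewrite /edge_pivot (symA y z) (symA x z).
by case: (A z z); case: (A z x); case: (A z y).
Qed.

Lemma nonsingular_edge_pivot A X x y : symmetric A ->
  x \in X -> y \in X -> ~~ A x x -> ~~ A y y -> A x y ->
  nonsingular (adjF A) X -> nonsingular (adjF (edge_pivot A x y)) (X :\ x :\ y).
Proof.
move=> symA xX yX Axx Ayy Axy X_ns g g_ker z zX'.
set X' := X :\ x :\ y in zX' g_ker *.
have yx : y != x by apply: contraNneq Axx => yx; rewrite -{2}yx.
have yX' : y \notin X' by rewrite !inE eqxx.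
have xyX' : x \notin y |: X' by rewrite !inE eqxx andbF orbF eq_sym.
have defX : X = x |: (y |: X') by rewrite !setD1K // !inE yx.
have [Mxx Myy Mxy Myx] : [/\ adjF A x x = 0, adjF A y y = 0, adjF A x y = 1
                          & adjF A y x = 1].
  by rewrite /adjF (symA y x) (negbTE Axx) (negbTE Ayy) Axy.
pose Sx := \sum_(w in X') g w * adjF A w x.
pose Sy := \sum_(w in X') g w * adjF A w y.
pose f w := if w == x then Sy else if w == y then Sx else g w.
have fg w : w \in X' -> f w = g w.
  by rewrite /f !inE => /and3P [/negbTE -> /negbTE -> _].
have sum_f t : \sum_(w in X) f w * adjF A w t =
    \sum_(w in X') g w * adjF A w t + Sx * adjF A y t + Sy * adjF A x t.
  rewrite defX !big_setU1 //= addrC [f y * _ + _]addrC /f eqxx (negbTE yx) eqxx.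
  by congr (_ + _ + _); apply: eq_bigr => w wX'; congr (_ * _); exact: fg.
rewrite -fg //; apply: X_ns; last by move: zX'; rewrite !inE => /and3P [].
move=> t; rewrite sum_f defX !in_setU1 => /or3P [/eqP ->|/eqP ->|tX'].
- by rewrite Mxx Myx mulr0 addr0 mulr1 addF2xx.
- by rewrite Myy Mxy mulr0 addr0 mulr1 addF2xx.
- rewrite -[RHS](g_ker t tX') /Sx /Sy !big_distrl -!big_split /=.
  apply: eq_bigr => w _.
  by rewrite /adjF /edge_pivot !F2_of_bool_addb !F2_of_bool_andb !mulrDr !mulrA.
Qed.

Lemma nonsingular_loopless_even A X : symmetric A ->
  {in X, forall z, ~~ A z z} -> nonsingular (adjF A) X -> ~~ odd #|X|.
Proof.
have [n ltXn] := ubnP #|X|; elim: n => // n IH in A X ltXn *.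
move=> symA noloop X_ns.
have [->|[x xX]] := set_0Vmem X; first by rewrite cards0.
have [/exists_inP [y yX Axy]|/exists_inP noedge] := boolP [exists y in X, A x y];
  last first.
  case: (zero_row_singular xX _ X_ns) => t tX.
  by rewrite /adjF; case Axt: (A x t) => //; case: noedge; exists t.
have yx : y != x by apply: contraNneq (noloop x xX) => yx; rewrite -{2}yx.
have cardX : #|X| = (#|X :\ x :\ y|).+2.
  by rewrite (cardsD1 x X) xX (cardsD1 y (X :\ x)) !inE yx yX.
have := nonsingular_edge_pivot symA xX yX (noloop x xX) (noloop y yX) Axy X_ns.
rewrite cardX /= negbK; apply: IH; first by move: ltXn; rewrite cardX => /ltnW.
  exact: edge_pivot_sym.
move=> z /setD1P [_ /setD1P [_ zX]]; rewrite edge_pivot_loop //; exact: noloop.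
Qed.

Lemma nonsingular_edge A x y : symmetric A ->
  ~~ A x x -> ~~ A y y -> A x y -> nonsingular (adjF A) [set x; y].
Proof.
move=> symA Axx Ayy Axy f f_ker.
have xy : x != y by apply: contraNneq Axx => xy; rewrite {2}xy.
have sum_xy t : \sum_(z in [set x; y]) f z * adjF A z t =
    f x * adjF A x t + f y * adjF A y t.
  by rewrite big_setU1 ?inE //= big_set1.
have := f_ker x (set21 x y); rewrite sum_xy /adjF (negbTE Axx) (symA y x) Axy.
rewrite mulr0 add0r mulr1 => fy.
have := f_ker y (set22 x y); rewrite sum_xy /adjF (negbTE Ayy) Axy.
rewrite mulr0 addr0 mulr1 => fx.
by move=> z /set2P [] ->.
Qed.

Definition loopless_closed A W Z : bool :=
  [&& Z \subset W, [forall z in Z, ~~ A z z] &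
      [forall z in Z, forall r in W :\: Z, ~~ A z r]].

Definition obstructed A W : {set T} :=
  [set x | [exists Z, [&& loopless_closed A W Z, x \in Z & [exists y in Z, A x y]]]].

Lemma loopless_closedP A W Z :
  reflect [/\ Z \subset W, {in Z, forall z, ~~ A z z} &
               forall z r, z \in Z -> r \in W -> r \notin Z -> ~~ A z r]
          (loopless_closed A W Z).
Proof.
apply: (iffP and3P) => [[ZW /forall_inP Zloop /forall_inP Zcl]|[ZW Zloop Zcl]].
  split=> // z r zZ rW rZ; apply: (forall_inP (Zcl z zZ)); exact/setDP.
split=> //; apply/forall_inP => // z zZ; apply/forall_inP => r /setDP [rW rZ].
exact: Zcl.
Qed.

Lemma obstructedP A W x :
  reflect (exists Z, [/\ loopless_closed A W Z, x \in Z & exists2 y, y \in Z & A x y])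
          (x \in obstructed A W).
Proof.
rewrite inE; apply: (iffP existsP) => [[Z /and3P [ZW xZ /exists_inP]]|].
  by exists Z.
by case=> Z [ZW xZ /exists_inP]; exists Z; rewrite ZW xZ.
Qed.

Lemma obstructed_sub A W : obstructed A W \subset W.
Proof.
apply/subsetP => x /obstructedP [Z [/loopless_closedP [ZW _ _] xZ _]].
exact: subsetP ZW x xZ.
Qed.

Lemma loc_comp_eq A u v q r :
  A q u = A q v -> A u r = A v r -> loc_comp A u q r = loc_comp A v q r.
Proof. by rewrite /loc_comp => -> ->. Qed.

Lemma obstructed_loc_comp_loop A W u v : symmetric A -> A u v ->
  u \in obstructed (loc_comp A v) W -> A u u.
Proof.
move=> symA Auv /obstructedP [Z [/loopless_closedP [_ Zloop _] uZ _]].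
by move: (Zloop u uZ); rewrite /loc_comp Auv symA Auv; case: (A u u).
Qed.

(* If no obstructed vertex of [H*v] were adjacent to [v], then [H] and [H*v]
   would agree on the rows of the non-isolated part of a witness for [H*v],
   which would then be a witness for [H]. *)
Lemma obstructed_loc_comp_adj A W v : symmetric A ->
  obstructed A W = set0 -> obstructed (loc_comp A v) (W :\ v) != set0 ->
  exists2 u, u \in obstructed (loc_comp A v) (W :\ v) & A u v.
Proof.
set B := loc_comp A v => symA noobs /set0Pn [x].
case/obstructedP=> M [/loopless_closedP [MW Mloop Mcl] xM [y yM Bxy]].
have [/exists_inP //|/exists_inP noadj] :=
  boolP [exists u in obstructed B (W :\ v), A u v].
pose M1 := [set z in M | [exists y in M, B z y]].
have M1M : M1 \subset M by apply/subsetP => z /setIdP [].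
have M1_obs z : z \in M1 -> z \in obstructed B (W :\ v).
  case/setIdP=> zM /exists_inP [t tM Bzt]; apply/obstructedP; exists M.
  by split=> //; [apply/loopless_closedP | exists t].
have Azv z : z \in M1 -> A z v = false.
  by move/M1_obs => z_obs; apply/negbTE/negP => Azv; apply: noadj; exists z.
have BA z r : z \in M1 -> B z r = A z r.
  by move/Azv; rewrite /B /loc_comp => ->; rewrite addbF.
have xM1 : x \in M1 by rewrite inE xM; apply/exists_inP; exists y.
have yM1 : y \in M1.
  by rewrite inE yM; apply/exists_inP; exists x; rewrite // /B (loc_comp_sym v symA).
suff : x \in obstructed A W by rewrite noobs inE.
apply/obstructedP; exists M1; split=> //; last by exists y; rewrite // -BA.
apply/loopless_closedP; split.
- by apply: subset_trans M1M (subset_trans MW (subsetDl _ _)).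
- by move=> z zM1; rewrite -BA //; apply: Mloop (subsetP M1M z zM1).
move=> z r zM1 rW rM1; have zM := subsetP M1M z zM1.
have [->|rv] := eqVneq r v; first by rewrite Azv.
have [rM|rM] := boolP (r \in M); last by rewrite -BA //; apply: Mcl => //; apply/setD1P.
move: rM1; rewrite inE rM /= => /exists_inP noBr.
rewrite -BA //; apply/negP => Bzr; apply: noBr.
by exists z; rewrite // /B (loc_comp_sym v symA).
Qed.

Section ObstructionShrinks.
Variables (A : rel T) (W M : {set T}) (u v y0 : T).
Hypotheses (symA : symmetric A) (vW : v \in W) (Auv : A u v).
Hypotheses (Mcl : loopless_closed (loc_comp A v) (W :\ v) M).
Hypotheses (uM : u \in M) (y0M : y0 \in M) (Buy0 : loc_comp A v u y0).

Let Avu : A v u. Proof. by rewrite symA. Qed.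

Let uW : u \in W :\ v.
Proof. by case/loopless_closedP: Mcl => MW _ _; apply: subsetP MW u uM. Qed.

Lemma loopless_closed_loc_comp_notin Z :
  loopless_closed (loc_comp A u) (W :\ u) Z -> v \notin Z.
Proof.
case/loopless_closedP: Mcl => MW Mloop _ /loopless_closedP [_ Zloop Zcl].
apply/negP => vZ.
have y0W : y0 \in W :\ v := subsetP MW y0 y0M.
have y0u : y0 != u by apply: contraTneq Buy0 => ->; apply: Mloop.
have Cvy0 : loc_comp A u v y0.
  by move: Buy0; rewrite /loc_comp Auv Avu; case: (A u y0); case: (A v y0).
have y0Z : y0 \in Z.
  apply: contraTT Cvy0 => y0Z; apply: Zcl => //.
  by apply/setD1P; split=> //; case/setD1P: y0W.
move: (Zloop y0 y0Z) (Mloop y0 y0M) Buy0.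
rewrite /loc_comp Auv (symA y0 u) (symA y0 v) /=.
by case: (A y0 y0); case: (A u y0); case: (A v y0).
Qed.

Lemma loopless_closed_loc_comp_rows Z q :
  loopless_closed (loc_comp A u) (W :\ u) Z -> q \in Z ->
  A q u = A q v /\ A q q = A q u.
Proof.
move=> Zcl' qZ; have vZ := loopless_closed_loc_comp_notin Zcl'.
case/loopless_closedP: Zcl' => _ Zloop Zcl.
have vWu : v \in W :\ u.
  by apply/setD1P; split=> //; apply: contraTneq uW => ->; rewrite !inE eqxx.
move: (Zcl q v qZ vWu vZ) (Zloop q qZ); rewrite /loc_comp Auv (symA u q) /=.
by case: (A q v); case: (A q u); case: (A q q).
Qed.

Lemma loopless_closed_loc_comp_merge Z :
  loopless_closed (loc_comp A u) (W :\ u) Z ->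
  loopless_closed (loc_comp A v) (W :\ v) (Z :|: M).
Proof.
move=> Zcl'; have vZ := loopless_closed_loc_comp_notin Zcl'.
have rows := loopless_closed_loc_comp_rows Zcl'.
case/loopless_closedP: Zcl' => ZW _ Zcl; case/loopless_closedP: Mcl => MW Mloop Mcl'.
apply/loopless_closedP; split.
- rewrite subUset MW andbT; apply/subsetP => z zZ; apply/setD1P; split.
    by apply: contraNneq vZ => <-.
  by case/setD1P: (subsetP ZW z zZ).
- move=> z /setUP [zZ|]; last exact: Mloop.
  have [Azu Azz] := rows z zZ.
  by rewrite /loc_comp -Azu Azz (symA v z) -Azu andbb addbb.
move=> q r /setUP [qZ|qM] rW; rewrite inE negb_or => /andP [rZ rM]; last exact: Mcl'.
have [Aqu _] := rows q qZ.
have ru : r != u by apply: contraNneq rM => ->.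
have rWu : r \in W :\ u by apply/setD1P; split=> //; case/setD1P: rW.
have Aur : A u r = A v r.
  by move: (Mcl' u r uM rW rM); rewrite /loc_comp Auv /=; case: (A u r); case: (A v r).
by rewrite -(loc_comp_eq Aqu Aur); apply: Zcl.
Qed.

End ObstructionShrinks.

Lemma obstructed_loc_comp_subset A W u v : symmetric A -> v \in W -> A u v ->
  u \in obstructed (loc_comp A v) (W :\ v) ->
  obstructed (loc_comp A u) (W :\ u) \subset obstructed (loc_comp A v) (W :\ v) :\ u.
Proof.
move=> symA vW Auv /obstructedP [M [Mcl uM [y0 y0M Buy0]]].
have merge := loopless_closed_loc_comp_merge symA vW Auv Mcl uM y0M Buy0.
have rows := loopless_closed_loc_comp_rows symA vW Auv Mcl uM y0M Buy0.
apply/subsetP => x /obstructedP [Z [Zcl xZ [y yZ Cxy]]].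
have /loopless_closedP [ZW _ _] := Zcl.
rewrite in_setD1; apply/andP; split.
  by apply: contraTneq (subsetP ZW x xZ) => ->; rewrite !inE eqxx.
apply/obstructedP; exists (Z :|: M); split; [exact: merge | by rewrite inE xZ |].
exists y; first by rewrite inE yZ.
have [[Axu _] [Ayu _]] := (rows Z x Zcl xZ, rows Z y Zcl yZ).
by rewrite -(loc_comp_eq Axu) // symA Ayu symA.
Qed.

Lemma exists_unobstructed_loc_comp A W v : symmetric A ->
  obstructed A W = set0 -> v \in W -> A v v ->
  exists v, [/\ v \in W, A v v & obstructed (loc_comp A v) (W :\ v) = set0].
Proof.
move=> symA noobs.
have [n] := ubnP #|obstructed (loc_comp A v) (W :\ v)|.
elim: n => // n IH in v *; move=> lt_obs_n vW Avv.
have [obs0|obs_ne] := eqVneq (obstructed (loc_comp A v) (W :\ v)) set0.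
  by exists v.
have [u u_obs Auv] := obstructed_loc_comp_adj symA noobs obs_ne.
have uW : u \in W by case/setD1P: (subsetP (obstructed_sub _ _) u u_obs).
apply: (IH u) uW (obstructed_loc_comp_loop symA Auv u_obs).
move: lt_obs_n; rewrite (cardsD1 u) u_obs add1n ltnS; apply: leq_trans.
by rewrite ltnS subset_leq_card // obstructed_loc_comp_subset.
Qed.

Lemma nonsingular_edgeless A Y :
  {in Y &, forall x y, ~~ A x y} -> nonsingular (adjF A) Y -> Y = set0.
Proof.
move=> noedge Y_ns; apply/setP => x; rewrite inE; apply/negbTE/negP => xY.
apply: (zero_row_singular xY _ Y_ns) => t tY.
by rewrite /adjF (negbTE (noedge x t xY tY)).
Qed.

Lemma DH_loc_comp A W v X : v \in W -> A v v -> v \notin X ->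
  X \in sets (DH (loc_comp A v) (W :\ v)) <-> v |: X \in sets (DH A W).
Proof.
move=> vW Avv vX; split=> [/DHP [XW X_ns]|/DHP [vXW vX_ns]]; apply/DHP; split.
- by rewrite subUset sub1set vW (subset_trans XW (subsetDl _ _)).
- exact/nonsingular_loc_comp.
- apply/subsetP => x xX; apply/setD1P; split; first by apply: contraNneq vX => <-.
  exact: subsetP vXW x (setU1r v xX).
- exact/(nonsingular_loc_comp Avv vX).
Qed.

Lemma full_lc_seq_edgeless A W :
  {in W &, forall x y, ~~ A x y} -> full_lc_seq (DH A W) [::].
Proof.
move=> noedge; split; first by split=> // i _; rewrite set_nil; apply: set0_DH.
move=> Y /DHP [YW Y_ns] _; rewrite set_nil; apply: nonsingular_edgeless Y_ns.
by move=> x y xY yY; apply: noedge; apply: subsetP YW _ _.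
Qed.

Lemma full_lc_seq_loc_comp A W v s : v \in W -> A v v ->
  full_lc_seq (DH (loc_comp A v) (W :\ v)) s -> full_lc_seq (DH A W) (v :: s).
Proof.
move=> vW Avv [[s_uniq sW s_lc] s_max].
have vs : v \notin s by apply/negP => /sW; rewrite !inE eqxx.
split; first split.
- by rewrite /= vs.
- by move=> x /predU1P [->|/sW /setD1P []].
- case=> [|i] lei; first by rewrite take0 set_nil; apply: set0_DH.
  rewrite /= set_cons; apply/DH_loc_comp => //; last exact: s_lc.
  by apply: contra vs; rewrite inE => /mem_take.
move=> Y Y_in svY.
have vY : v \in Y by apply: (subsetP svY); rewrite set_cons setU11.
have Yv_in : Y :\ v \in sets (DH (loc_comp A v) (W :\ v)).
  by apply/(DH_loc_comp vW Avv); rewrite ?setD1K // !inE eqxx.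
rewrite -(setD1K vY) set_cons (s_max _ Yv_in) //.
apply/subsetP => x xs; apply/setD1P; split.
  by apply: contraNneq vs => <-; rewrite inE in xs.
by apply: (subsetP svY); rewrite set_cons setU1r.
Qed.

Lemma unobstructed_full_lc_seq A W : symmetric A -> obstructed A W = set0 ->
  exists s, full_lc_seq (DH A W) s.
Proof.
have [n] := ubnP #|W|; elim: n => // n IH in A W *; move=> ltWn symA noobs.
have [/exists_inP [v0 v0W Av0v0]|/exists_inP noloop] := boolP [exists v in W, A v v].
  have [v [vW Avv noobs_v]] := exists_unobstructed_loc_comp symA noobs v0W Av0v0.
  have ltWv : (#|W :\ v| < n)%N by move: ltWn; rewrite (cardsD1 v) vW.
  have [s s_full] := IH _ _ ltWv (loc_comp_sym v symA) noobs_v.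
  by exists (v :: s); apply: full_lc_seq_loc_comp.
exists [::]; apply: full_lc_seq_edgeless => x y xW yW; apply/negP => Axy.
suff : x \in obstructed A W by rewrite noobs inE.
apply/obstructedP; exists W; split=> //; last by exists y.
apply/loopless_closedP; split=> // [z zW|z r _ _ /negP //].
by apply/negP => Azz; apply: noloop; exists z.
Qed.

End Graphs.

Section DirectSums.
Variable T : finType.
Implicit Types (D E : setsys T) (X Y : {set T}).

Lemma mem_dsum D1 D2 X1 X2 :
  X1 \in sets D1 -> X2 \in sets D2 -> X1 :|: X2 \in sets (dsum D1 D2).
Proof. by move=> X1_in X2_in; apply/imset2P; exists X1 X2. Qed.

Lemma set0_dsum D1 D2 :
  set0 \in sets (dsum D1 D2) -> set0 \in sets D1 /\ set0 \in sets D2.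
Proof.
case/imset2P=> X1 X2 X1_in X2_in /esym/eqP; rewrite setU_eq0.
by case/andP=> /eqP X10 /eqP X20; split; [rewrite -X10 | rewrite -X20].
Qed.

Lemma wf_dsum D1 D2 : wf_setsys D1 -> wf_setsys D2 -> wf_setsys (dsum D1 D2).
Proof.
move=> wf1 wf2 X /imset2P [X1 X2 X1_in X2_in ->].
by apply: setUSS; [apply: wf1 | apply: wf2].
Qed.

Lemma dsumC D1 D2 : dsum D1 D2 = dsum D2 D1.
Proof.
rewrite /dsum setUC; congr SetSys; apply/setP => X.
by apply/imset2P/imset2P => -[X1 X2 X1_in X2_in ->]; exists X2 X1; rewrite // setUC.
Qed.

Lemma dsumA D1 D2 D3 : dsum (dsum D1 D2) D3 = dsum D1 (dsum D2 D3).
Proof.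
rewrite /dsum /= setUA; congr SetSys; apply/setP => X; apply/imset2P/imset2P.
  case=> _ X3 /imset2P [X1 X2 X1_in X2_in ->] X3_in ->.
  by exists X1 (X2 :|: X3); rewrite ?setUA // mem_dsum.
case=> X1 _ X1_in /imset2P [X2 X3 X2_in X3_in ->] ->.
by exists (X1 :|: X2) X3; rewrite ?setUA // mem_dsum.
Qed.

Lemma dsum_setIl D1 D2 X1 X2 : wf_setsys D1 -> wf_setsys D2 ->
  [disjoint gset D1 & gset D2] -> X1 \in sets D1 -> X2 \in sets D2 ->
  (X1 :|: X2) :&: gset D1 = X1.
Proof.
move=> wf1 wf2 disj X1_in X2_in.
rewrite setIUl (setIidPl (wf1 _ X1_in)) (_ : X2 :&: _ = set0) ?setU0 //.
by apply/disjoint_setI0/(disjointWl (wf2 _ X2_in)); rewrite disjoint_sym.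
Qed.

Lemma summand_setI D1 D X :
  is_summand D1 D -> X \in sets D -> X :&: gset D1 \in sets D1.
Proof.
case=> D2 [wf1 wf2 disj ->] /imset2P [X1 X2 X1_in X2_in ->].
by rewrite (dsum_setIl wf1 wf2 disj X1_in X2_in).
Qed.

Lemma summand_gset_neq0 D1 D X :
  is_summand D1 D -> X \in sets D1 -> X != set0 -> gset D1 != set0.
Proof.
case=> D2 [wf1 _ _ _] X_in; apply: contraNneq => D10.
by rewrite -subset0 -D10; apply: wf1.
Qed.

Lemma summand_set0 D1 D : set0 \in sets D -> is_summand D1 D -> set0 \in sets D1.
Proof. by move=> D0 [D2 [_ _ _ defD]]; move: D0; rewrite defD => /set0_dsum []. Qed.

Lemma summand_dsuml D E1 E2 : wf_setsys E1 -> wf_setsys E2 ->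
  [disjoint gset E1 & gset E2] -> is_summand (dsum E1 E2) D -> is_summand E1 D.
Proof.
move=> wf1 wf2 disj12 [D2 [_ wfD2 disj ->]]; exists (dsum E2 D2).
split; [by [] | exact: wf_dsum | | by rewrite dsumA].
rewrite /= -setI_eq0 setIUr setU_eq0 !setI_eq0 disj12 /=.
by apply: disjointWl disj; apply: subsetUl.
Qed.

Lemma even_dsuml E1 E2 :
  set0 \in sets E2 -> even_setsys (dsum E1 E2) -> even_setsys E1.
Proof.
by move=> E20 [b evenb]; exists b => X X_in; rewrite -(setU0 X) evenb ?mem_dsum.
Qed.

Lemma even_summand_connected D D1 : set0 \in sets D ->
  is_summand D1 D -> even_setsys D1 -> (exists2 X, X \in sets D1 & X != set0) ->
  exists D2, [/\ is_summand D2 D, even_setsys D2, connected D2 &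
                 exists2 X, X \in sets D2 & X != set0].
Proof.
move=> D0; have [n] := ubnP #|gset D1|; elim: n => // n IH in D1 *.
move=> ltD1n D1_sum D1_even [X X_in Xne].
have [D1_conn|] := classic (connected D1); first by exists D1; split=> //; exists X.
move=> /NNPP [E1 [E2 [wf1 wf2 disj [ne1 ne2 defD1]]]].
have split_summand E E' : wf_setsys E -> wf_setsys E' ->
    [disjoint gset E & gset E'] -> gset E' != set0 -> D1 = dsum E E' ->
    (exists2 Y, Y \in sets E & Y != set0) ->
    exists D2, [/\ is_summand D2 D, even_setsys D2, connected D2 &
                   exists2 X, X \in sets D2 & X != set0].
  move=> wf wf' disjE neE' defD1' Ene; apply: (IH E) _ _ _ Ene.
  - rewrite -ltnS; apply: leq_trans ltD1n; rewrite ltnS defD1' /= cardsU.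
    by rewrite disjoint_setI0 // cards0 subn0 -addn1 leq_add2l card_gt0.
  - by apply: (summand_dsuml wf wf' disjE); rewrite -defD1'.
  apply: (@even_dsuml _ E'); last by rewrite -defD1'.
  by have := summand_set0 D0 D1_sum; rewrite defD1' => /set0_dsum [].
move: X_in Xne; rewrite defD1 => /imset2P [X1 X2 X1_in X2_in ->].
have [->|X1ne] := eqVneq X1 set0; rewrite ?set0U => X2ne.
  by apply: (split_summand E2 E1); rewrite 1?disjoint_sym 1?dsumC //; exists X2.
by apply: (split_summand E1 E2) => //; exists X1.
Qed.

Lemma lc_seq_even_summand D D1 s : lc_seq D s -> is_summand D1 D ->
  even_setsys D1 -> [set x in s] :&: gset D1 = set0.
Proof.
move=> [s_uniq _ s_lc] D1_sum [b evenb].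
have D1_0 : set0 \in sets D1.
  by apply: summand_set0 D1_sum; have := s_lc 0 (leq0n _); rewrite take0 set_nil.
have prefix_even i : (i <= size s)%N -> ~~ odd #|[set x in take i s] :&: gset D1|.
  move=> lei; rewrite (evenb _ (summand_setI D1_sum (s_lc i lei))).
  by rewrite -(evenb _ D1_0) cards0.
apply/setP => x; rewrite !inE; apply/negbTE/andP => -[xs xV1].
move: s_uniq prefix_even; case/splitPr: xs => s1 s2.
rewrite cat_uniq /= => /and3P [_ /norP [xs1 _] _] prefix_even.
have le1 : (size s1 <= size (s1 ++ x :: s2))%N by rewrite size_cat leq_addr.
have le2 : ((size s1).+1 <= size (s1 ++ x :: s2))%N.
  by rewrite size_cat /= addnS ltnS leq_addr.
have := prefix_even _ le1; have := prefix_even _ le2.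
rewrite take_cat ltnNge leqnSn subSnn /= take0 cats1 take_size_cat //.
have -> : [set y in rcons s1 x] :&: gset D1 = x |: ([set y in s1] :&: gset D1).
  by apply/setP => z; rewrite !inE mem_rcons in_cons; case: eqVneq => [->|].
by rewrite cardsU1 !inE (negbTE xs1) /= => /negbTE ->.
Qed.

Lemma full_lc_seq_even_summand D D1 s : full_lc_seq D s -> is_summand D1 D ->
  even_setsys D1 -> sets D1 = [set set0].
Proof.
move=> [s_lc s_max] D1_sum D1_even.
have S0 := lc_seq_even_summand s_lc D1_sum D1_even.
have S_in : [set x in s] \in sets D.
  by case: s_lc => _ _ /(_ (size s)); rewrite take_size; apply.
case: D1_sum S_in s_max => D2 [wf1 wf2 disj ->].
case/imset2P=> X1 X2 X1_in X2_in defS s_max.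
have X10 : X1 = set0 by rewrite -(dsum_setIl wf1 wf2 disj X1_in X2_in) -defS.
apply/setP => Y; rewrite inE; apply/idP/eqP => [Y_in|->]; last by rewrite -X10.
have /s_max defYX2 : Y :|: X2 \in sets (dsum D1 D2) by apply: mem_dsum.
rewrite -(dsum_setIl wf1 wf2 disj Y_in X2_in) defYX2 ?S0 //.
by rewrite defS X10 set0U subsetUr.
Qed.

Lemma connected_trivial_setsys D : connected D -> gset D != set0 ->
  sets D = [set set0] -> exists2 v, v \in gset D & D = SetSys [set v] [set set0].
Proof.
case: D => V S D_conn /set0Pn [v vV] S0; rewrite /= in vV S0; subst S.
exists v => //.
have [V0|Vne] := eqVneq (V :\ v) set0; first by rewrite -(setD1K vV) V0 setU0.
case: D_conn; exists (SetSys [set v] [set set0]), (SetSys (V :\ v) [set set0]).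
have wf0 W : wf_setsys (SetSys W [set set0]) by move=> X /set1P ->; apply: sub0set.
split=> //=; first by rewrite disjoints1 !inE eqxx.
split=> //; first by apply/set0Pn; exists v; rewrite inE.
by rewrite /dsum /= setD1K // imset2_set1l imset_set1 setU0.
Qed.

End DirectSums.

Section GraphSummands.
Variable T : finType.
Implicit Types (A : rel T) (V X Z : {set T}).

Lemma wf_DH A V : wf_setsys (DH A V).
Proof. by move=> X /DHP []. Qed.

Lemma DH_loopless_even A Z : symmetric A ->
  {in Z, forall z, ~~ A z z} -> even_setsys (DH A Z).
Proof.
move=> symA noloop; exists false => X /DHP [XZ X_ns]; apply/negbTE.
by apply: nonsingular_loopless_even X_ns => // z /(subsetP XZ); apply: noloop.
Qed.

Section ClosedSplit.
Variables (A : rel T) (V Z : {set T}).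
Hypotheses (symA : symmetric A) (ZV : Z \subset V).
Hypothesis Zcl : forall z r, z \in Z -> r \in V -> r \notin Z -> ~~ A z r.

Lemma nonsingular_closed_split X : X \subset V ->
  nonsingular (adjF A) X <->
  nonsingular (adjF A) (X :&: Z) /\ nonsingular (adjF A) (X :\: Z).
Proof.
move=> XV; have := nonsingular_block (M := adjF A) (subsetIl X Z).
rewrite setDIr setDv set0U; apply=> a b /setIP [_ aZ] /setDP [bX bZ].
have /negbTE Aab := Zcl aZ (subsetP XV b bX) bZ.
by rewrite /adjF Aab symA Aab.
Qed.

Lemma DH_dsum : DH A V = dsum (DH A Z) (DH A (V :\: Z)).
Proof.
have ZVZ : Z :|: (V :\: Z) = V by rewrite setDE setUIr setUCr setIT (setUidPr ZV).
rewrite /dsum /= ZVZ; congr SetSys; apply/setP => X; apply/idP/imset2P.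
  case/DHP=> XV /(nonsingular_closed_split XV) [XZ_ns XVZ_ns].
  exists (X :&: Z) (X :\: Z); rewrite ?setID //; apply/DHP; split=> //.
    exact: subsetIr.
  exact: setSD.
case=> X1 X2 /DHP [X1Z X1_ns] /DHP [X2VZ X2_ns] ->.
have X12V : X1 :|: X2 \subset V.
  by rewrite subUset (subset_trans X1Z ZV) (subset_trans X2VZ (subsetDl _ _)).
have X2Z : [disjoint X2 & Z].
  apply: disjointWl X2VZ _.
  by rewrite disjoint_sym -setI_eq0 setIDA setDIl setDv set0I.
apply/DHP; split=> //; apply/(nonsingular_closed_split X12V).
rewrite setIUl (setIidPl X1Z) (disjoint_setI0 X2Z) setU0 setDUl (setDidPl X2Z).
suff -> : X1 :\: Z = set0 by rewrite set0U.
by apply/eqP; rewrite setD_eq0.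
Qed.

Lemma DH_summand : is_summand (DH A Z) (DH A V).
Proof.
exists (DH A (V :\: Z)); split; rewrite ?DH_dsum //; try exact: wf_DH.
by rewrite /= -setI_eq0 setIDA setDIl setDv set0I.
Qed.

End ClosedSplit.

Lemma obstructed_even_summand A V x : symmetric A -> x \in obstructed A V ->
  exists D1 : setsys T, [/\ is_summand D1 (DH A V), even_setsys D1 &
                            exists2 X, X \in sets D1 & X != set0].
Proof.
move=> symA /obstructedP [Z [/loopless_closedP [ZV Zloop Zcl] xZ [y yZ Axy]]].
exists (DH A Z); split; [exact: DH_summand | exact: DH_loopless_even |].
exists [set x; y]; last by apply/set0Pn; exists x; rewrite !inE eqxx.
apply/DHP; split; first by rewrite subUset !sub1set xZ yZ.
by apply: nonsingular_edge; rewrite ?Zloop.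
Qed.

End GraphSummands.

Unset Implicit Arguments.

Theorem mainTheorem9 (T : finType) (D : setsys T) :
  binary_normal D ->
  ((exists s : seq T, full_lc_seq D s) <->
   (forall D1 : setsys T,
      is_summand D1 D -> even_setsys D1 -> connected D1 -> gset D1 != set0 ->
      exists2 v, v \in gset D & D1 = SetSys [set v] [set set0])).
Proof.
case=> A [symA defD]; split.
  case=> s s_full D1 D1_sum D1_even D1_conn D1ne.
  have D1_triv := full_lc_seq_even_summand s_full D1_sum D1_even.
  have [v vV1 ->] := connected_trivial_setsys D1_conn D1ne D1_triv.
  by exists v => //; case: D1_sum => D2 [_ _ _ ->]; rewrite inE vV1.
move=> trivial_summands; rewrite defD; apply: (unobstructed_full_lc_seq symA).
apply/eqP; apply: contraT => /set0Pn [x /(obstructed_even_summand symA)].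
case=> D1 [D1_sum D1_even D1ne].
have [D2 [D2_sum D2_even D2_conn [Y Y_in Yne]]] :=
  even_summand_connected (set0_DH A _) D1_sum D1_even D1ne.
rewrite -defD in D2_sum.
have [v _ defD2] := trivial_summands D2 D2_sum D2_even D2_conn
  (summand_gset_neq0 D2_sum Y_in Yne).
by move: Y_in Yne; rewrite defD2 => /set1P ->; rewrite eqxx.
Qed.
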